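(* Let $L$ be an infinite set and let $Q$ be either the edgeless cube $Q_L$ or the edged cube $\bar Q_L$. Let $\vec\sigma,\vec\tau$ be universally convergent basic sequences. Then $\vec\sigma\sim\vec\tau$ if and only if $\vec\sigma\,\mathrm{id}=\vec\tau\,\mathrm{id}$, where $\mathrm{id}$ is the identity labelling. Moreover, if either holds, then $\vec\sigma f=\vec\tau f$ for every labelling $f$.
   Context: Let $L$ be an infinite set, $-L=\{-r:r\in L\}$ a disjoint copy of $L$, and $0$ a new element; $L^\dagger=-L\cup\{0\}\cup L$ with $-(-r)=r$, $-0=0$. Adjoin $\pm\infty$ with $-(+\infty)=-\infty$ and set $\bar L^\dagger=L^\dagger\cup\{\pm\infty\}$. Points of $U=(\bar L^\dagger)^3$ have coordinates $x,y,z$. The edgeless cube $Q_L$ is the set of points of $U$ with exactly one coordinate in $\{\pm\infty\}$ (cells). The edged cube $\bar Q_L$ is the set of cells $(p,i)$ with $p\in U$, $i\in\{x,y,z\}$, $p_i\in\{\pm\infty\}$ ($i$ marks the face). For $i\in\{x,y,z\}$, $\alpha\in\bar L^\dagger$, the quarter-turn twist $T_{i,\alpha}$ is the permutation of cells fixing every cell whose point $p$ has $p_i\ne\alpha$ and acting on the others by $T_{x,\alpha}(\alpha,y,z)=(\alpha,-z,y)$, $T_{y,\alpha}(x,\alpha,z)=(z,\alpha,-x)$, $T_{z,\alpha}(x,y,\alpha)=(-y,x,\alpha)$ (in $\bar Q_L$ the marked coordinate is carried along by the rotation). Basic twists are $T,T^2,T^3$ for quarter-turn twists $T$. A basic sequence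 is a sequence $\langle\sigma_\eta:\eta<\theta\rangle$ of basic twists of ordinal length $\theta$. A labelling is a map $f$ from cells to $X\cup\{\mathrm{NaC}\}$ for a set $X\not\ni\mathrm{NaC}$; it is legal if it never takes value NaC; a configuration is a labelling with $X$ the six colors red, white, green, orange, yellow, blue. A twist $\sigma$ acts by $(\sigma f)(c)=f(\sigma^{-1}c)$. Applying $\vec\sigma=\langle\sigma_\eta:\eta<\theta\rangle$ to $f_0$ produces $f_{\eta+1}=\sigma_\eta f_\eta$, and for limit $\lambda\le\theta$, $f_\lambda(c)$ is the eventually constant value of $f_\eta(c)$ ($\eta<\lambda$) if it exists and NaC otherwise; the terminal labelling $f_\theta$ is denoted $\vec\sigma f_0$. The identity labelling $\mathrm{id}$ labels each cell by itself; $\vec\sigma$ is universally convergent if $\vec\sigma\,\mathrm{id}$ is legal. $\vec\sigma\sim\vec\tau$ means $\vec\sigma f=\vec\tau f$ for every configuration $f$. *)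

From Stdlib Require Import Arith Lia List Relations ClassicalEpsilon.
Set Implicit Arguments.

Inductive Ldag (L : Type) : Type :=
| LNeg (r : L) | LZero | LPos (r : L) | LNInf | LPInf.
Arguments LZero {L}. Arguments LNInf {L}. Arguments LPInf {L}.

Definition ldneg {L} (a : Ldag L) : Ldag L :=
  match a with
  | LNeg r => LPos r | LPos r => LNeg r | LZero => LZero
  | LNInf => LPInf | LPInf => LNInf end.

Definition isInf {L} (a : Ldag L) : bool :=
  match a with LNInf | LPInf => true | _ => false end.

Lemma isInf_neg L (a : Ldag L) : isInf (ldneg a) = isInf a.
Proof. destruct a; reflexivity. Qed.

Record pt (L : Type) := Pt { px : Ldag L; py : Ldag L; pz : Ldag L }.

Inductive axis := AX | AY | AZ.

Definition coord {L} (p : pt L) (i : axis) : Ldag L :=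
  match i with AX => px p | AY => py p | AZ => pz p end.

Definition decP (P : Prop) : {P} + {~ P} := excluded_middle_informative P.

(* the rotation part of the quarter turn T_{i,alpha} on a point lying on the slice *)
Definition rot_pt {L} (i : axis) (p : pt L) : pt L :=
  match i with
  | AX => Pt (px p) (ldneg (pz p)) (py p)
  | AY => Pt (pz p) (py p) (ldneg (px p))
  | AZ => Pt (ldneg (py p)) (px p) (pz p)
  end.

Definition tw_pt {L} (i : axis) (alpha : Ldag L) (p : pt L) : pt L :=
  if decP (coord p i = alpha) then rot_pt i p else p.

(* where the rotation carries the coordinate direction j (marked face) *)
Definition carry (i j : axis) : axis :=
  match i, j with
  | AX, AY => AZ | AX, AZ => AY
  | AY, AX => AZ | AY, AZ => AX
  | AZ, AX => AY | AZ, AY => AX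
  | _, _ => j end.

Definition ninf {L} (p : pt L) : nat :=
  Nat.b2n (isInf (px p)) + Nat.b2n (isInf (py p)) + Nat.b2n (isInf (pz p)).

Definition edgeless_cell (L : Type) := { p : pt L | ninf p = 1 }.
Definition edged_cell (L : Type) := { q : pt L * axis | isInf (coord (fst q) (snd q)) = true }.

Lemma ninf_rot L i (p : pt L) : ninf (rot_pt i p) = ninf p.
Proof. destruct i; unfold ninf; simpl; rewrite ?isInf_neg; lia. Qed.

Lemma ninf_tw L i a (p : pt L) : ninf (tw_pt i a p) = ninf p.
Proof. unfold tw_pt; destruct (decP _); [apply ninf_rot | reflexivity]. Qed.

Definition edgeless_tw {L} (i : axis) (a : Ldag L) (c : edgeless_cell L) : edgeless_cell L :=
  exist _ (tw_pt i a (proj1_sig c)) (eq_trans (ninf_tw i a _) (proj2_sig c)).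

Definition edged_tw_raw {L} (i : axis) (a : Ldag L) (q : pt L * axis) : pt L * axis :=
  if decP (coord (fst q) i = a) then (rot_pt i (fst q), carry i (snd q)) else q.

Lemma edged_tw_ok L i (a : Ldag L) q :
  isInf (coord (fst q) (snd q)) = true -> isInf (coord (fst (edged_tw_raw i a q)) (snd (edged_tw_raw i a q))) = true.
Proof.
  unfold edged_tw_raw; destruct (decP _); [|auto].
  destruct q as [p j]; simpl; destruct i, j; simpl; rewrite ?isInf_neg; auto.
Qed.

Definition edged_tw {L} (i : axis) (a : Ldag L) (c : edged_cell L) : edged_cell L :=
  exist _ (edged_tw_raw i a (proj1_sig c)) (edged_tw_ok i a _ (proj2_sig c)).

Inductive cube_kind := Edgeless | Edged.

Definition cell (L : Type) (k : cube_kind) : Type :=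
  match k with Edgeless => edgeless_cell L | Edged => edged_cell L end.

Definition qtwist {L} (k : cube_kind) : axis -> Ldag L -> cell L k -> cell L k :=
  match k with Edgeless => @edgeless_tw L | Edged => @edged_tw L end.

Inductive power := P1 | P2 | P3.

Record btwist (L : Type) := BT { bt_axis : axis; bt_alpha : Ldag L; bt_pow : power }.

(* sigma^{-1} for sigma = T^n is T^(4-n) (T has order 4) *)
Definition inv_pow (n : power) : nat := match n with P1 => 3 | P2 => 2 | P3 => 1 end.

(* labellings with values in X u {NaC}; NaC is None *)
Definition labelling (C X : Type) := C -> option X.

(* (sigma f)(c) = f(sigma^{-1} c) *)
Definition bt_act {L} (k : cube_kind) {X} (b : btwist L) (f : labelling (cell L k) X)
  : labelling (cell L k) X :=
  fun c => f (Nat.iter (inv_pow (bt_pow b)) (qtwist k (bt_axis b) (bt_alpha b)) c).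

Record WellOrder := WO {
  wo_car :> Type;
  wo_lt : wo_car -> wo_car -> Prop;
  wo_wf : well_founded wo_lt;
  wo_trans : forall a b c, wo_lt a b -> wo_lt b c -> wo_lt a c;
  wo_total : forall a b, wo_lt a b \/ a = b \/ wo_lt b a }.

(* a basic sequence <sigma_eta : eta < theta>, theta given by the well-order bs_idx *)
Record bseq (L : Type) := BSeq { bs_idx : WellOrder; bs_tw : bs_idx -> btwist L }.

(* the ordinal theta+1 = {eta : eta <= theta}: None stands for theta itself *)
Definition ltO (I : WellOrder) (x y : option I) : Prop :=
  match x, y with
  | Some a, Some b => wo_lt I a b
  | Some _, None => True
  | _, _ => False end.

Arguments ltO {I} x y.

Lemma wf_ltO (I : WellOrder) : well_founded (@ltO I).
Proof.
  assert (HS : forall a : I, Acc (@ltO I) (Some a)).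
  { intro a; induction (wo_wf I a) as [a _ IH].
    constructor; intros [b|] Hb; simpl in Hb; [apply IH; exact Hb | contradiction]. }
  intros [a|]; [apply HS|]. constructor; intros [b|] Hb; [apply HS|simpl in Hb; contradiction].
Qed.

Section Run.
Variables (C X : Type) (I : WellOrder) (step : I -> labelling C X -> labelling C X)
  (f0 : labelling C X).

Definition run_step (x : option I) (rec : forall y, ltO y x -> labelling C X) : labelling C X :=
  match decP (exists b : I, ltO (Some b) x /\ forall z, ~ (ltO (Some b) z /\ ltO z x)) with
  | left H =>   (* successor x = b+1: f_{b+1} = sigma_b f_b *)
      let (b, Hb) := constructive_indefinite_description _ H in
      step b (rec (Some b) (proj1 Hb))
  | right _ =>
      match decP (exists y, ltO y x) with
      | left _ =>   (* limit: eventually constant value, else NaC *)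
          fun c =>
            match decP (exists v : option X, exists y (hy : ltO y x),
                          forall z (hz : ltO z x), (y = z \/ ltO y z) -> rec z hz c = v) with
            | left Hv => proj1_sig (constructive_indefinite_description _ Hv)
            | right _ => None
            end
      | right _ => f0   (* x = 0 *)
      end
  end.

Definition run : option I -> labelling C X :=
  Fix (@wf_ltO I) (fun _ => labelling C X) run_step.
End Run.

Definition seq_apply {L} (k : cube_kind) {X} (s : bseq L) (f0 : labelling (cell L k) X)
  : labelling (cell L k) X :=
  @run (cell L k) X (bs_idx s) (fun b => bt_act k (bs_tw s b)) f0 None.

Definition id_lab {L} (k : cube_kind) : labelling (cell L k) (cell L k) := fun c => Some c.

Definition legal {C X} (f : labelling C X) : Prop := forall c, f c <> None.

Definition univ_convergent {L} (k : cube_kind) (s : bseq L) : Prop :=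
  legal (seq_apply k s (id_lab k)).

Inductive color := Red | White | Green | Orange | Yellow | Blue.

Definition configuration (C : Type) := labelling C color.

Definition seq_equiv {L} (k : cube_kind) (s t : bseq L) : Prop :=
  forall f : configuration (cell L k), seq_apply k s f = seq_apply k t f.

Definition infinite (L : Type) : Prop := ~ exists l : list L, forall x, In x l.

(* Every basic twist acts on labellings by precomposition with a map of cells,
   so the run of a sequence on a labelling f is read off from its run on the
   identity labelling: wherever the identity run converges to a cell d, the run
   on f converges to f d, also through limit stages, because an eventually
   constant value stays eventually constant after applying f. Hence for
   universally convergent sequences the terminal identity labelling determines
   the action on all labellings, and two-colour configurations separating one
   cell from all others recover it from the action on configurations. *)
From Stdlib Require Import FunctionalExtensionality ClassicalEpsilon.
Set Implicit Arguments.

Lemma run_unfold C X (I : WellOrder) step (f0 : labelling C X) x :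
  run I step f0 x = run_step I step f0 x (fun y _ => run I step f0 y).
Proof.
  unfold run; apply (Fix_eq (@wf_ltO I) (fun _ => labelling C X)).
  intros x' rec rec' Hrec.
  replace rec' with rec; [reflexivity|].
  extensionality y; extensionality hy; apply Hrec.
Qed.

Definition eventual_value {C X} {I : WellOrder} (x : option I)
  (rec : forall y, ltO y x -> labelling C X) (c : C) (v : option X) : Prop :=
  exists y (hy : ltO y x),
    forall z (hz : ltO z x), (y = z \/ ltO y z) -> rec z hz c = v.

Lemma eventual_value_unique C X (I : WellOrder) (x : option I)
  (rec : forall y, ltO y x -> labelling C X) c v w :
  eventual_value x rec c v -> eventual_value x rec c w -> v = w.
Proof.
  intros [[a|] [ha Hv]] [[b|] [hb Hw]]; try contradiction.
  destruct (wo_total I a b) as [Hab | [<- | Hba]].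
  - rewrite <- (Hv _ hb (or_intror Hab)); apply Hw; left; reflexivity.
  - rewrite <- (Hv _ ha (or_introl eq_refl)); apply Hw; left; reflexivity.
  - rewrite <- (Hv _ ha (or_introl eq_refl)); apply Hw; right; exact Hba.
Qed.

Lemma eventual_value_map C X Y (I : WellOrder) (x : option I)
  (rec : forall y, ltO y x -> labelling C X) (rec' : forall y, ltO y x -> labelling C Y)
  (f : X -> option Y) c d :
  (forall z (hz : ltO z x) e, rec z hz c = Some e -> rec' z hz c = f e) ->
  eventual_value x rec c (Some d) -> eventual_value x rec' c (f d).
Proof.
  intros Hrec [y [hy Hy]]; exists y, hy; intros z hz Hyz.
  apply Hrec, Hy, Hyz.
Qed.

Section PrecompositionRun.

Variables (C : Type) (I : WellOrder) (h : I -> C -> C).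

Definition precomp_step {X} (b : I) (g : labelling C X) : labelling C X :=
  fun c => g (h b c).

Lemma run_precomp_of_id X (f : labelling C X) x c d :
  run I precomp_step (fun e => Some e) x c = Some d ->
  run I precomp_step f x c = f d.
Proof.
  revert c d; induction (wf_ltO I x) as [x _ IH]; intros c d Hid.
  rewrite run_unfold in Hid |- *; unfold run_step in Hid |- *.
  destruct (decP _) as [Hsucc | _].
  - destruct (constructive_indefinite_description _ Hsucc) as [b [hb _]].
    apply IH with (1 := hb), Hid.
  - destruct (decP (exists y, ltO y x)) as [_ | _].
    + destruct (decP _) as [Hid_lim | _] in Hid; [| discriminate].
      destruct (constructive_indefinite_description _ Hid_lim) as [v Hv];
        simpl in Hid; subst v.
      assert (Hf : eventual_value x (fun y _ => run I precomp_step f y) c (f d)).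
      { apply (eventual_value_map (rec := fun y _ => run I precomp_step (fun e => Some e) y))
          with (2 := Hv).
        intros z hz e; apply IH, hz. }
      destruct (decP _) as [Hf_lim | Hnot]; [| exfalso; apply Hnot; exists (f d); exact Hf].
      destruct (constructive_indefinite_description _ Hf_lim) as [w Hw]; simpl.
      exact (eventual_value_unique (rec := fun y _ => run I precomp_step f y) Hw Hf).
    + injection Hid as <-; reflexivity.
Qed.

End PrecompositionRun.

Lemma seq_apply_of_id L k (s : bseq L) X (f : labelling (cell L k) X) c d :
  seq_apply k s (id_lab k) c = Some d -> seq_apply k s f c = f d.
Proof.
  apply (run_precomp_of_id (bs_idx s) (fun b =>
    Nat.iter (inv_pow (bt_pow (bs_tw s b))) (qtwist k (bt_axis (bs_tw s b)) (bt_alpha (bs_tw s b))))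
    f None c).
Qed.

Lemma seq_apply_factor L k (s : bseq L) X (f : labelling (cell L k) X) :
  univ_convergent k s ->
  seq_apply k s f =
  fun c => match seq_apply k s (id_lab k) c with Some d => f d | None => None end.
Proof.
  intros Hs; extensionality c.
  destruct (seq_apply k s (id_lab k) c) as [d|] eqn:Hd.
  - exact (seq_apply_of_id k s f c Hd).
  - contradiction (Hs c Hd).
Qed.

Lemma seq_apply_eq_of_id_eq L k (s t : bseq L) :
  univ_convergent k s -> univ_convergent k t ->
  seq_apply k s (id_lab k) = seq_apply k t (id_lab k) ->
  forall X (f : labelling (cell L k) X), seq_apply k s f = seq_apply k t f.
Proof.
  intros Hs Ht E X f.
  rewrite (seq_apply_factor f Hs), (seq_apply_factor f Ht), E; reflexivity.
Qed.

Lemma id_eq_of_seq_equiv L k (s t : bseq L) :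
  univ_convergent k s -> univ_convergent k t ->
  seq_equiv k s t -> seq_apply k s (id_lab k) = seq_apply k t (id_lab k).
Proof.
  intros Hs Ht Eq; extensionality c.
  destruct (seq_apply k s (id_lab k) c) as [d|] eqn:Hd; [| contradiction (Hs c Hd)].
  destruct (seq_apply k t (id_lab k) c) as [d'|] eqn:Hd'; [| contradiction (Ht c Hd')].
  pose (mark := fun e : cell L k => if decP (e = d) then Some Red else Some White).
  assert (Hmark := f_equal (fun g => g c) (Eq mark)); simpl in Hmark.
  rewrite (seq_apply_of_id k s mark c Hd), (seq_apply_of_id k t mark c Hd') in Hmark.
  unfold mark in Hmark.
  destruct (decP (d = d)) as [_ | Hnot]; [| contradiction (Hnot eq_refl)].
  destruct (decP (d' = d)) as [-> | _]; [reflexivity | discriminate].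
Qed.

Theorem lemma3p5 (L : Type) (HL : infinite L) (k : cube_kind) (s t : bseq L)
  (Hs : univ_convergent k s) (Ht : univ_convergent k t) :
  (seq_equiv k s t <-> seq_apply k s (id_lab k) = seq_apply k t (id_lab k)) /\
  ((seq_equiv k s t \/ seq_apply k s (id_lab k) = seq_apply k t (id_lab k)) ->
   forall (X : Type) (f : labelling (cell L k) X), seq_apply k s f = seq_apply k t f).
Proof.
  pose proof (id_eq_of_seq_equiv Hs Ht) as Hequiv_id.
  pose proof (seq_apply_eq_of_id_eq Hs Ht) as Hid_all.
  split.
  - split; [exact Hequiv_id | intros E f; exact (Hid_all E color f)].
  - intros [E | E]; [apply Hid_all, Hequiv_id, E | apply Hid_all, E].
Qed.
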